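(* For all $\lambda\in[0,1]$ and all $i\neq j$, $k\in\{-1,1\}$, the functions $R_{i,j}^{(k)}$ satisfy $$R_{i,j}^{(k)}(\lambda)=\lambda\Big[p_{i,j}^{(k)}+\sum_{m\neq i,j}p_{i,m}^{(k)}R_{m,j}^{(k)}(\lambda)+\sum_{m\neq i}p_{i,m}^{(-k)}R_{m,i}^{(-k)}(\lambda)R_{i,j}^{(k)}(\lambda)\Big].$$
   Context: Fix an integer $N\ge 3$. Let $\mathcal G_N$ be the groupoid with object set $\{1,\dots,N\}$ generated by arrows $A_{i,j}^{(k)}$, $i\neq j\in\{1,\dots,N\}$, $k\in\{-1,1\}$, with source $i$ and target $j$, subject to the relations $A_{i,j}^{(k)}A_{j,\ell}^{(k)}=A_{i,\ell}^{(k)}$ for all $i,j,\ell$, $k$, with the convention $A_{i,i}^{(k)}:=e_i$ (unit at object $i$). Let $\mathcal A$ be its arrow set. Let $\{W_n\}_{n\ge0}$ be the Markov chain on $\mathcal A$ with $P(W_{n+1}=y\mid W_n=x)=p_{i,j}^{(k)}$ if $x^{-1}y=A_{i,j}^{(k)}$ with $i\ne j$ and $0$ otherwise, where $p_{i,j}^{(k)}\in(0,1)$ and $\sum_{j\ne i}\sum_{k=\pm1}p_{i,j}^{(k)}=1$ for each $i$; $P_x,E_x$ denote law and expectation with $W_0=x$. For $x\in\mathcal A$ let $T(0,x)=\inf\{n\ge0:W_n=W_0x\}$ (possibly $\infty$), and define $R_{i,j}^{(k)}(\lambda)=E_{e_i}[\lambda^{T(0,A_{i,j}^{(k)})}]=\sum_{n\ge0}P_{e_i}(T(0,A_{i,j}^{(k)})=n)\lambda^n$.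 *)

From HB Require Import structures.
From mathcomp Require Import all_boot all_order all_algebra.
From mathcomp Require Import all_classical all_reals all_analysis.
Set Implicit Arguments. Unset Strict Implicit. Unset Printing Implicit Defensive.
Import Order.TTheory GRing.Theory Num.Theory.
Local Open Scope ring_scope.

(* Objects are 'I_N (object i+1 of the paper is the ordinal i).             *)
(* Labels k \in {-1,1} are encoded as bool: true <-> +1, false <-> -1, so    *)
(* that -k is ~~ k.                                                         *)
(* For a fixed label k the generators A^(k)_{ij} with the relations          *)
(* A^(k)_{ij} A^(k)_{jl} = A^(k)_{il} form the pair groupoid on {1..N}; G_N  *)
(* is the free product (amalgamated over the objects) of the two copies.     *)
(* Its arrows with source s are therefore in bijection with reduced words    *)
(*   A^(k1)_{s,i1} A^(k2)_{i1,i2} ... A^(kn)_{i(n-1),in}                     *)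
(* with consecutive objects distinct and consecutive labels different         *)
(* (k_{t+1} = - k_t); the empty word is the unit e_s.                        *)
(* We store such a word latest-letter-first as the list                      *)
(*   [:: (kn,in); ...; (k1,i1)].                                             *)

Definition word (N : nat) := seq (bool * 'I_N).


Definition target N (s : 'I_N) (w : word N) : 'I_N := head s [seq x.2 | x <- w].

(* right multiplication of the arrow (s, w) by the generator A^(k)_{t,j},
   t = target s w, j != t; the result is again in reduced form *)
Definition mulgen N (s : 'I_N) (w : word N) (j : 'I_N) (k : bool) : word N :=
  match w with
  | [::] => [:: (k, j)]
  | (k', t) :: r =>
      if k' != k then (k, j) :: w
      else if j == head s [seq x.2 | x <- r] then r   (* A_{p t} A_{t p} = e_p *)
      else (k, j) :: r                                 (* A_{p t} A_{t j} = A_{p j} *)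
  end.

(* A step of the walk is a pair (j,k): multiply on the right by A^(k)_{t,j}. *)
Definition step N := ('I_N * bool)%type.

Fixpoint walk N (s : 'I_N) (w : word N) (st : seq (step N)) : seq (word N) :=
  match st with
  | [::] => [::]
  | (j, k) :: st' => let w' := mulgen s w j k in w' :: walk s w' st'
  end.

Fixpoint pathprob (R : realType) N (p : 'I_N -> 'I_N -> bool -> R)
    (s : 'I_N) (w : word N) (st : seq (step N)) : R :=
  match st with
  | [::] => 1
  | (j, k) :: st' =>
      (if j != target s w then p (target s w) j k else 0)
        * pathprob p s (mulgen s w j k) st'
  end.

(* P_{e_i}(T(0,x) = n): W_0 = e_i (empty word), and W_0 x = x. *)
Definition hitprob (R : realType) N (p : 'I_N -> 'I_N -> bool -> R)
    (i : 'I_N) (x : word N) (n : nat) : R :=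
  \sum_(st : n.-tuple (step N))
     pathprob p i [::] st *
     (let pos := [::] :: walk i [::] st in
      ((nth [::] pos n == x) && all (fun y => y != x) (take n pos))%:R).

Definition Rgen (R : realType) N (p : 'I_N -> 'I_N -> bool -> R)
    (i j : 'I_N) (k : bool) (lam : R) : R :=
  limn (fun M : nat => \sum_(0 <= n < M) hitprob p i [:: (k, j)] n * lam ^+ n).

From HB Require Import structures.
From mathcomp Require Import all_boot all_order all_algebra.
From mathcomp Require Import all_classical all_reals all_analysis.
From mathcomp Require Import ring zify.
Set Implicit Arguments. Unset Strict Implicit. Unset Printing Implicit Defensive.
Import Order.TTheory GRing.Theory Num.Theory numFieldNormedType.Exports.
Local Open Scope classical_set_scope.
Local Open Scope ring_scope.

(* Decompose the first step of the walk from e_i.  A step A^(k)_{i,j} hits at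
   once.  After a step A^(k)_{i,m} with m <> j the walk sits at A^(k)_{i,m};
   since left multiplication by A^(k)_{i,m} commutes with the walk and
   A^(k)_{i,m} A^(k)_{m,j} = A^(k)_{i,j}, the remaining time is distributed as
   T(0, A^(k)_{m,j}) from e_m.  After a step A^(-k)_{i,m} the reduced word
   starts with a letter of label -k, which survives until the walk is back at
   e_i; by the same translation argument that return time is distributed as
   T(0, A^(-k)_{m,i}), and the walk then starts afresh.  So the hitting
   probabilities satisfy a convolution recurrence, and generating functions of
   nonnegative sequences with sum at most 1 turn convolutions into products. *)

Lemma sum_tupleS (V : nmodType) (T : finType) n (F : n.+1.-tuple T -> V) :
  \sum_(t : n.+1.-tuple T) F t = \sum_(a : T) \sum_(t : n.-tuple T) F [tuple of a :: t].
Proof.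
rewrite pair_big /= (reindex (fun u : T * n.-tuple T => [tuple of u.1 :: u.2])) //=.
exists (fun t => (thead t, [tuple of behead t])) => [[a t] _ | t _] /=.
  by congr pair; apply: val_inj.
by rewrite [RHS]tuple_eta; apply: val_inj.
Qed.

Lemma sum_tuple0 (V : nmodType) (T : finType) (F : 0.-tuple T -> V) :
  \sum_(t : 0.-tuple T) F t = F [tuple].
Proof. by rewrite (big_pred1 [tuple]) // => t; apply/esym/eqP/tuple0. Qed.

Lemma sum_pair (V : nmodType) (I J : finType) (F : I * J -> V) :
  \sum_(a : I * J) F a = \sum_(i : I) \sum_(j : J) F (i, j).
Proof. by rewrite pair_bigA; apply: eq_bigr => -[]. Qed.

Definition conv (R : pzSemiRingType) (f g : nat -> R) n :=
  \sum_(t < n.+1) f t * g (n - t)%N.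

Lemma conv_mulexp (R : comPzSemiRingType) (f g : nat -> R) x n :
  conv (fun t => f t * x ^+ t) (fun t => g t * x ^+ t) n = conv f g n * x ^+ n.
Proof.
rewrite /conv mulr_suml; apply: eq_bigr => t _.
by rewrite mulrACA -exprD subnKC // -ltnS.
Qed.

Section CauchyProduct.
Variable R : realType.
Implicit Types a b : R ^nat.

Lemma series_conv a b M :
  series (conv a b) M = \sum_(0 <= t < M) a t * series b (M - t)%N.
Proof.
elim: M => [|M IH]; first by rewrite /series /= !big_nil.
under [RHS]eq_big_nat => t /andP[_ tM] do rewrite subSn // seriesSr mulrDr.
rewrite seriesSr IH big_split /= big_nat_recr //= subnn /conv big_mkord.
by rewrite [series b 0%N]/series /= big_nil mulr0 addr0 big_mkord.
Qed.

Lemma nondecreasing_series_ge0 a : (forall n, 0 <= a n) -> nondecreasing_seq (series a).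
Proof. by move=> a0; apply: nondecreasing_series => n _ _. Qed.

Lemma cvg_series_conv a b : (forall n, 0 <= a n) -> (forall n, 0 <= b n) ->
    cvgn (series a) -> cvgn (series b) ->
  series (conv a b) @ \oo --> limn (series a) * limn (series b).
Proof.
move=> a0 b0 ca cb.
have [ndA ndB] := (nondecreasing_series_ge0 a0, nondecreasing_series_ge0 b0).
have ndC : nondecreasing_seq (series (conv a b)).
  by apply: nondecreasing_series_ge0 => n; rewrite sumr_ge0 // => t _; rewrite mulr_ge0.
have C_le M : series (conv a b) M <= series a M * series b M.
  rewrite series_conv [series a M]/series /= mulr_suml; apply: ler_sum => t _.
  by rewrite ler_wpM2l // ndB // leq_subr.
have le_C M : series a M * series b M <= series (conv a b) (M + M)%N.
  rewrite series_conv [series a M]/series /= mulr_suml.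
  rewrite [leRHS](@big_cat_nat _ _ _ M) //= ?leq_addr // -[leLHS]addr0.
  rewrite lerD ?sumr_ge0 // => [|t _]; last by rewrite mulr_ge0 // /series /= sumr_ge0.
  by apply: ler_sum_nat => t /andP[_ tM]; rewrite ler_wpM2l // ndB //; lia.
have C_ub M : series (conv a b) M <= limn (series a) * limn (series b).
  apply: le_trans (C_le M) _.
  by rewrite ler_pM ?nondecreasing_cvgn_le // /series /= sumr_ge0.
have cC : cvgn (series (conv a b)).
  by apply: nondecreasing_is_cvgn => //; exists (limn (series a) * limn (series b)) => _ [M _ <-].
suff <- : limn (series (conv a b)) = limn (series a) * limn (series b) by [].
apply/le_anti/andP; split; first by apply: limr_le => //; apply: nearW.
apply: (cvgr_to_le (cvgM ca cb)); apply: nearW => M.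
exact: le_trans (le_C M) (nondecreasing_cvgn_le ndC cC _).
Qed.

Lemma cvg_series_delta (c : R) : series (fun n => (n == 0)%:R * c) @ \oo --> c.
Proof.
rewrite -cvg_shiftS; apply: cvg_near_cst; apply: nearW => M /=.
by rewrite /series /= big_nat_recl //= mul1r big1 ?addr0 // => n _; rewrite mul0r.
Qed.

End CauchyProduct.

Section Words.
Variable N : nat.

Fixpoint alternating (w : word N) : bool :=
  if w is a :: r then
    if r is b :: _ then (a.1 != b.1) && alternating r else true
  else true.

Lemma alternating_mulgen s w j k : alternating w -> alternating (mulgen s w j k).
Proof.
case: w => [|[k' t] [|b r]] //=.
  by move=> _; case: ifP => h /=; [rewrite eq_sym h | case: ifP].
move=> /andP[hb hr]; case: ifP => [hk|/negbFE/eqP <-]; first by rewrite /= eq_sym hk hb hr.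
by case: ifP => //= _; rewrite hb hr.
Qed.

(* The arrow A^(kk)_{i,m} (m, u) with source i, in reduced form: only the
   earliest letter of u, stored last, can cancel or merge with A^(kk)_{i,m}. *)
Definition lmulgen (i m : 'I_N) (kk : bool) : word N -> word N :=
  fix lmul u :=
    match u with
    | [::] => [:: (kk, m)]
    | [:: a] => if a.1 != kk then [:: a; (kk, m)]
                else if a.2 == i then [::] else [:: (kk, a.2)]
    | a :: r => a :: lmul r
    end.

Lemma lmulgen_nil i m kk : lmulgen i m kk [::] = [:: (kk, m)].
Proof. by []. Qed.

Lemma lmulgen1 i m kk a : lmulgen i m kk [:: a] =
  if a.1 != kk then [:: a; (kk, m)] else if a.2 == i then [::] else [:: (kk, a.2)].
Proof. by []. Qed.

Lemma lmulgen_cons2 i m kk a b r :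
  lmulgen i m kk [:: a, b & r] = a :: lmulgen i m kk (b :: r).
Proof. by []. Qed.

Arguments lmulgen : simpl never.

Lemma target_lmulgen i m kk u : target i (lmulgen i m kk u) = target m u.
Proof.
case: u => [|[k1 i1] [|b r]] //; rewrite ?lmulgen_cons2 //= lmulgen1.
by case: ifP => //= _; case: ifP => //= /eqP.
Qed.

Lemma lmulgen_mulgen i m kk u j k : m != i -> j != target m u ->
  lmulgen i m kk (mulgen m u j k) = mulgen i (lmulgen i m kk u) j k.
Proof.
move=> mi; case: u => [|[k1 t] [|b r]] /= hj; rewrite /target /= in hj.
- by rewrite lmulgen1 lmulgen_nil /= eq_sym; case: eqP => [->|].
- case: (eqVneq j m) => [->|jm]; case: (eqVneq t i) => [?|ti]; subst;
    case: k k1 kk => [] [] [] /=;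
    by rewrite ?lmulgen_cons2 ?lmulgen1 ?lmulgen_nil /= ?eqxx
      ?(negbTE jm) ?(negbTE ti) ?(negbTE hj) /= ?(negbTE mi) ?(negbTE hj).
- rewrite !lmulgen_cons2 -[head i _]/(target i _) target_lmulgen.
  by case: ifP => _; rewrite ?lmulgen_cons2 //; case: ifP.
Qed.

Lemma lmulgen_eq_nil i m kk u : (lmulgen i m kk u == [::]) = (u == [:: (kk, i)]).
Proof.
case: u => [|[k1 t] [|b r]] //; last by rewrite lmulgen_cons2 eqseq_cons /= andbF.
rewrite lmulgen1 eqseq_cons andbT xpair_eqE /=.
by case: (eqVneq k1 kk) => [->|ne]; rewrite ?eqxx ?ne ?(negbTE ne) //=; case: (t == i).
Qed.

Lemma lmulgen_eq_gen i m kk j u : alternating u -> m != j -> j != i ->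
  (lmulgen i m kk u == [:: (kk, j)]) = (u == [:: (kk, j)]).
Proof.
move=> + mj ji; case: u => [|[k1 t] [|[k2 t2] r]] /=.
- by rewrite lmulgen_nil eqseq_cons xpair_eqE (negbTE mj) andbF.
- move=> _; rewrite lmulgen1 eqseq_cons andbT xpair_eqE.
  case: (eqVneq k1 kk) => [->|ne] /=; last by rewrite eqseq_cons andbF.
  case: (eqVneq t i) => [->|_] /=; first by rewrite [i == j]eq_sym (negbTE ji).
  by rewrite eqseq_cons andbT xpair_eqE eqxx.
- case/andP=> k12 _; rewrite lmulgen_cons2 !eqseq_cons lmulgen_eq_nil /= andbF.
  by rewrite !xpair_eqE; case: k1 k2 kk k12 => [] [] [] //=; rewrite !andbF.
Qed.

Definition first_label (w : word N) : option bool :=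
  if w is a :: r then Some (last a r).1 else None.

Lemma first_label_mulgen s w j k kk : first_label w = Some kk ->
  first_label (mulgen s w j k) = Some kk \/ mulgen s w j k = [::].
Proof.
case: w => [|[k' t] r] //= [<-].
case: ifP => [_|/negbFE/eqP k'k]; first by left.
case: ifP => _; first by case: r => [|b r]; [right | left].
by left; case: r => //=; rewrite k'k.
Qed.

End Words.

Section Walk.
Variables (R : realType) (N : nat) (p : 'I_N -> 'I_N -> bool -> R).

Definition stepprob (s : 'I_N) (w : word N) (a : step N) : R :=
  if a.1 != target s w then p (target s w) a.1 a.2 else 0.

Fixpoint hit (s : 'I_N) (w x : word N) (n : nat) : R :=
  if n is n'.+1 then
    (w != x)%:R * \sum_(a : step N) stepprob s w a * hit s (mulgen s w a.1 a.2) x n'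
  else (w == x)%:R.

Lemma sum_pathprob_hit s w x n :
  \sum_(st : n.-tuple (step N)) pathprob p s w st *
     (let pos := w :: walk s w st in
      ((nth [::] pos n == x) && all (fun y => y != x) (take n pos))%:R)
  = hit s w x n.
Proof.
elim: n w => [|n IH] w; first by rewrite sum_tuple0 /= mul1r andbT.
rewrite sum_tupleS /= mulr_sumr; apply: eq_bigr => -[j k] _.
rewrite -IH !mulr_sumr; apply: eq_bigr => st _ /=.
by rewrite /stepprob; case: (w != x); rewrite ?mul0r ?andbF ?mulr0 ?mul1r ?mulrA.
Qed.

Lemma hitprobE i x n : hitprob p i x n = hit i [::] x n.
Proof. exact: sum_pathprob_hit. Qed.

Lemma hit_self s x n : hit s x x n = (n == 0)%:R.
Proof. by case: n => [|n] /=; rewrite eqxx ?mul0r. Qed.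

Lemma conv_hit_self s x (f : nat -> R) n : conv (hit s x x) f n = f n.
Proof.
rewrite /conv big_ord_recl hit_self mul1r subn0 big1 ?addr0 // => t _.
by rewrite hit_self mul0r.
Qed.

Lemma hit_lmulgen i m kk x y n : m != i ->
    (forall u, alternating u -> (lmulgen i m kk u == y) = (u == x)) ->
  forall u, alternating u -> hit i (lmulgen i m kk u) y n = hit m u x n.
Proof.
move=> mi hxy; elim: n => [|n IH] u au /=; first by rewrite hxy.
rewrite hxy //; congr (_ * _); apply: eq_bigr => -[j k] _.
rewrite /stepprob target_lmulgen /=; case: ifP => hj; last by rewrite !mul0r.
by rewrite -lmulgen_mulgen // IH //; apply: alternating_mulgen.
Qed.

Lemma hit_lmulgen_gen i m j k n : m != i -> m != j -> j != i ->
  hit i [:: (k, m)] [:: (k, j)] n = hit m [::] [:: (k, j)] n.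
Proof.
move=> mi mj ji; rewrite -(lmulgen_nil i m k) (@hit_lmulgen _ _ _ [:: (k, j)]) //.
by move=> u au; apply: lmulgen_eq_gen.
Qed.

Lemma hit_lmulgen_nil i m k n : m != i ->
  hit i [:: (k, m)] [::] n = hit m [::] [:: (k, i)] n.
Proof.
move=> mi; rewrite -(lmulgen_nil i m k) (@hit_lmulgen _ _ _ [:: (k, i)]) //.
by move=> u _; apply: lmulgen_eq_nil.
Qed.

(* The earliest letter of w keeps its label until the walk is back at e_s. *)
Lemma hit_via_nil s kk x w n : first_label x != Some kk -> x != [::] ->
  first_label w = Some kk -> hit s w x n = conv (hit s w [::]) (hit s [::] x) n.
Proof.
move=> hx x0; have neq_x v : first_label v = Some kk -> (v == x) = false.
  by move=> hv; apply: contraNF hx => /eqP <-; rewrite hv.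
elim: n w => [|n IH] w hw; have w0 : (w == [::]) = false by case: w hw.
  by rewrite /conv big_ord1 /= neq_x // w0 mul0r.
rewrite /conv big_ord_recl /= neq_x // w0 mul0r add0r mul1r.
under [RHS]eq_bigr do rewrite mul1r mulr_suml.
rewrite exchange_big /=; apply: eq_bigr => a _.
have -> : hit s (mulgen s w a.1 a.2) x n =
    conv (hit s (mulgen s w a.1 a.2) [::]) (hit s [::] x) n.
  by have [/IH|->] := first_label_mulgen s a.1 a.2 hw; rewrite ?conv_hit_self.
by rewrite mulr_sumr; apply: eq_bigr => t _; rewrite /bump /= add1n subSS mulrA.
Qed.

Lemma hit_gen_succ i j k n : i != j ->
  hit i [::] [:: (k, j)] n.+1 = (n == 0)%:R * p i j k
  + \sum_(m | (m != i) && (m != j)) p i m k * hit m [::] [:: (k, j)] n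
  + \sum_(m | m != i)
      p i m (~~ k) * conv (hit m [::] [:: (~~ k, i)]) (hit i [::] [:: (k, j)]) n.
Proof.
move=> ij; rewrite /= mul1r sum_pair (bigD1 i) //= big1 ?add0r; last first.
  by move=> k' _; rewrite /stepprob /= eqxx mul0r.
have step_to m : m != i -> \sum_(k' : bool) stepprob i [::] (m, k') *
      hit i (mulgen i [::] (m, k').1 (m, k').2) [:: (k, j)] n =
    p i m k * hit i [:: (k, m)] [:: (k, j)] n
    + p i m (~~ k) * hit i [:: (~~ k, m)] [:: (k, j)] n.
  by move=> mi; rewrite big_bool /stepprob /target /= mi; case: k; rewrite // addrC.
rewrite (eq_bigr _ step_to) {step_to} big_split /= (bigD1 j) 1?eq_sym //=.
rewrite hit_self mulrC; congr (_ + _ + _); first by rewrite eq_sym.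
  by apply: eq_bigr => m /andP[mi mj]; rewrite hit_lmulgen_gen // eq_sym.
apply: eq_bigr => m mi; rewrite (@hit_via_nil _ (~~ k)) //; last by case: k.
by congr (_ * _); apply: eq_bigr => t _; rewrite hit_lmulgen_nil.
Qed.

Hypothesis p_ge0 : forall i j k, i != j -> 0 <= p i j k.
Hypothesis p_sum1 : forall i, \sum_(j | j != i) \sum_(k : bool) p i j k = 1.

Lemma stepprob_ge0 s w a : 0 <= stepprob s w a.
Proof. by rewrite /stepprob; case: ifP => // h; apply: p_ge0; rewrite eq_sym. Qed.

Lemma sum_stepprob s w : \sum_(a : step N) stepprob s w a = 1.
Proof.
rewrite sum_pair -(p_sum1 (target s w)) [RHS]big_mkcond; apply: eq_bigr => j _.
by rewrite /stepprob /=; case: ifP => _ //; rewrite big1.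
Qed.

Lemma hit_ge0 s w x n : 0 <= hit s w x n.
Proof.
elim: n w => [|n IH] w /=; first exact: ler0n.
by rewrite mulr_ge0 ?sumr_ge0 // => a _; rewrite mulr_ge0 ?stepprob_ge0.
Qed.

Lemma sum_hit_le1 s w x M : \sum_(0 <= n < M) hit s w x n <= 1.
Proof.
elim: M w => [|M IH] w; first by rewrite big_nil ler01.
rewrite big_nat_recl //=; case: (eqVneq w x) => [->|_].
  by rewrite big1 ?addr0 // => n _; rewrite mul0r.
rewrite add0r; under eq_bigr do rewrite mul1r.
rewrite exchange_big /= -(sum_stepprob s w); apply: ler_sum => a _.
by rewrite -mulr_sumr ler_piMr ?stepprob_ge0.
Qed.

End Walk.

Section GeneratingFunction.
Variables (R : realType) (N : nat) (p : 'I_N -> 'I_N -> bool -> R) (lam : R).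
Hypothesis p_ge0 : forall i j k, i != j -> 0 <= p i j k.
Hypothesis p_sum1 : forall i, \sum_(j | j != i) \sum_(k : bool) p i j k = 1.
Hypothesis lam01 : 0 <= lam <= 1.

Definition gf_term s x n := hit p s [::] x n * lam ^+ n.

Lemma gf_term_ge0 s x n : 0 <= gf_term s x n.
Proof. by case/andP: lam01 => lam0 _; rewrite mulr_ge0 ?exprn_ge0 ?hit_ge0. Qed.

Lemma cvgn_series_gf_term s x : cvgn (series (gf_term s x)).
Proof.
apply: nondecreasing_is_cvgn; first exact/nondecreasing_series_ge0/gf_term_ge0.
exists 1 => _ [M _ <-]; apply: le_trans (sum_hit_le1 p_ge0 p_sum1 s [::] x M).
case/andP: lam01 => lam0 lam1; apply: ler_sum => n _.
by rewrite ler_piMr ?hit_ge0 ?exprn_ile1.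
Qed.

Lemma RgenE i j k : Rgen p i j k lam = limn (series (gf_term i [:: (k, j)])).
Proof.
by congr (limn _); apply/funext => M; apply: eq_bigr => n _; rewrite hitprobE.
Qed.

Lemma gf_term_gen_succ i j k n : i != j ->
  gf_term i [:: (k, j)] n.+1 =
  lam * ((n == 0)%:R * p i j k
    + \sum_(m | (m != i) && (m != j)) p i m k * gf_term m [:: (k, j)] n
    + \sum_(m | m != i)
        p i m (~~ k) * conv (gf_term m [:: (~~ k, i)]) (gf_term i [:: (k, j)]) n).
Proof.
move=> ij; rewrite /gf_term hit_gen_succ // exprS !mulrDl !mulrDr !mulr_suml !mulr_sumr.
congr (_ + _ + _).
- by case: n => [|n]; rewrite ?expr0 ?mul0r ?mulr0 //; ring.
- by apply: eq_bigr => m _; ring.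
- by apply: eq_bigr => m _; rewrite conv_mulexp; ring.
Qed.

Lemma series_gf_term_gen i j k M : i != j ->
  series (gf_term i [:: (k, j)]) M.+1 =
  lam * (series (fun n => (n == 0)%:R * p i j k) M
    + \sum_(m | (m != i) && (m != j)) p i m k * series (gf_term m [:: (k, j)]) M
    + \sum_(m | m != i)
        p i m (~~ k) * series (conv (gf_term m [:: (~~ k, i)]) (gf_term i [:: (k, j)])) M).
Proof.
move=> ij; rewrite /series /= big_nat_recl // {1}/gf_term /= mul0r add0r.
under eq_bigr do rewrite gf_term_gen_succ //.
rewrite -mulr_sumr !big_split /=; congr (_ * (_ + _ + _));
  by rewrite exchange_big /=; apply: eq_bigr => m _; rewrite mulr_sumr.
Qed.

End GeneratingFunction.

Theorem proposition5p3 (R : realType) (N : nat) (hN : (3 <= N)%N)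
  (p : 'I_N -> 'I_N -> bool -> R)
  (hp : forall (i j : 'I_N) (k : bool), i != j -> 0 < p i j k < 1)
  (hsum : forall i : 'I_N, \sum_(j : 'I_N | j != i) \sum_(k : bool) p i j k = 1)
  (lam : R) (hlam : 0 <= lam <= 1)
  (i j : 'I_N) (hij : i != j) (k : bool) :
  Rgen p i j k lam =
  lam * (p i j k
         + \sum_(m : 'I_N | (m != i) && (m != j)) p i m k * Rgen p m j k lam
         + \sum_(m : 'I_N | m != i)
              p i m (~~ k) * Rgen p m i (~~ k) lam * Rgen p i j k lam).
Proof.
have p_ge0 a b k' : a != b -> 0 <= p a b k' by move/(hp _ _ k') => /andP[/ltW].
have cvg_gf := cvgn_series_gf_term p_ge0 hsum hlam.
rewrite !(RgenE p lam); under eq_bigr do rewrite RgenE.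
under [X in _ + X]eq_bigr do rewrite !RgenE -mulrA.
apply: cvg_lim => //; rewrite -cvg_shiftS.
under eq_fun do rewrite series_gf_term_gen //.
apply: cvgMl_tmp; apply: cvgD; first apply: cvgD.
- exact: cvg_series_delta.
- by apply: cvg_big => [|m _]; [exact: add_continuous | apply: cvgMl_tmp].
- apply: cvg_big => [|m _]; first exact: add_continuous.
  by apply: cvgMl_tmp; apply: cvg_series_conv => // n; apply: gf_term_ge0.
Qed.
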